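(* Run xOrder with the criterion $F=\widehat G_\infty$ (the $\lambda\to\infty$ limit of the objective). Then its output $o^*=o^*(n^a,n^b)$ satisfies $$\Delta\mathrm{xAUC}(o^* )\le\max\Big(\frac{1}{n_1^a},\frac{1}{n_1^b}\Big).$$
   Context: Setting: two disjoint finite groups $a$, $b$ of samples, each sample $u$ having label $Y_u\in\{0,1\}$; $n^a,n^b$ group sizes, $n_1^a,n_0^a$ numbers of label-1/label-0 samples in $a$ (similarly for $b$), all $\ge1$, $k_{a,b}=n_1^an_0^b$, $k_{b,a}=n_0^an_1^b$. Fixed within-group rankings $\mathrm{p}^a=(\mathrm{p}^{a(1)},\dots,\mathrm{p}^{a(n^a)})$, $\mathrm{p}^b=(\mathrm{p}^{b(1)},\dots,\mathrm{p}^{b(n^b)})$. A cross-group ordering is a ranked list of all samples of $a\cup b$ whose restrictions to $a,b$ are $\mathrm{p}^a,\mathrm{p}^b$; $\mathrm{xAUC}_o(a,b)$ is the fraction of pairs (label-1 sample of $a$, label-0 sample of $b$) in which the first is ranked above the second, $\mathrm{xAUC}_o(b,a)$ symmetrically, $\Delta\mathrm{xAUC}(o)=|\mathrm{xAUC}_o(a,b)-\mathrm{xAUC}_o(b,a)|$. Partial orderings: for $0\le i\le n^a$, $0\le j\le n^b$, an $(i,j)$-partial ordering is a ranked list of $\mathrm{p}^{a(1)},\dots,\mathrm{p}^{a(i)},\mathrm{p}^{b(1)},\dots,\mathrm{p}^{b(j)}$ preserving within-group orders. $H_{ab}(o)$ is the number of pairs $(k,h)$ with $1\le k\le i$, $1\le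 h\le n^b$, $Y_{\mathrm{p}^{a(k)}}=1$, $Y_{\mathrm{p}^{b(h)}}=0$, and either $h>j$ or ($h\le j$ and $\mathrm{p}^{a(k)}$ precedes $\mathrm{p}^{b(h)}$ in $o$); $H_{ba}(o)$ is the number of pairs $(h,k)$ with $1\le h\le j$, $1\le k\le n^a$, $Y_{\mathrm{p}^{b(h)}}=1$, $Y_{\mathrm{p}^{a(k)}}=0$, and either $k>i$ or ($k\le i$ and $\mathrm{p}^{b(h)}$ precedes $\mathrm{p}^{a(k)}$ in $o$). $\widehat G_\infty(o)=-\big|H_{ab}(o)/k_{a,b}-H_{ba}(o)/k_{b,a}\big|$; for a full ordering ($i=n^a,j=n^b$) this equals $-\Delta\mathrm{xAUC}(o)$. xOrder with criterion $F$: $o^*(i,0)=(\mathrm{p}^{a(1)},\dots,\mathrm{p}^{a(i)})$, $o^*(0,j)=(\mathrm{p}^{b(1)},\dots,\mathrm{p}^{b(j)})$; for $i=1,\dots,n^a$ and $j=1,\dots,n^b$, with $c_a=o^*(i-1,j)\oplus\mathrm{p}^{a(i)}$ and $c_b=o^*(i,j-1)\oplus\mathrm{p}^{b(j)}$ ($\oplus$ = append at the bottom), set $o^*(i,j)=c_a$ if $F(c_a)>F(c_b)$ and $o^*(i,j)=c_b$ otherwise. Output $o^*(n^a,n^b)$. *)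

From mathcomp Require Import all_boot all_order all_algebra.
Set Implicit Arguments. Unset Strict Implicit. Unset Printing Implicit Defensive.
Import Order.TTheory GRing.Theory Num.Theory.
Local Open Scope ring_scope.

(* Samples have type T (an eqType) with labels Y : T -> bool (true = label 1).
   A ranking/ordering is a list of samples, first element = ranked highest;
   appending at the bottom = rcons.  pa, pb are the fixed within-group rankings
   p^a, p^b (0-indexed: p^{a(k+1)} = nth x0 pa k); x0 is an irrelevant default
   element used only for out-of-range nth (never reached). *)

Section XOrder.
Variables (T : eqType) (x0 : T) (Y : T -> bool) (pa pb : seq T).

Definition precedes (o : seq T) (x y : T) : bool := (index x o < index y o)%N.

Definition k_ab : nat := (count Y pa * count (predC Y) pb)%N.
Definition k_ba : nat := (count (predC Y) pa * count Y pb)%N.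

Definition H_ab (i j : nat) (o : seq T) : nat :=
  (\sum_(k < i) \sum_(h < size pb)
     ([&& Y (nth x0 pa k), ~~ Y (nth x0 pb h)
        & (j <= h)%N || precedes o (nth x0 pa k) (nth x0 pb h)] : nat))%N.

Definition H_ba (i j : nat) (o : seq T) : nat :=
  (\sum_(h < j) \sum_(k < size pa)
     ([&& Y (nth x0 pb h), ~~ Y (nth x0 pa k)
        & (i <= k)%N || precedes o (nth x0 pb h) (nth x0 pa k)] : nat))%N.

Definition Ghat_inf (i j : nat) (o : seq T) : rat :=
  - `| (H_ab i j o)%:R / k_ab%:R - (H_ba i j o)%:R / k_ba%:R |.

(* xOrder with criterion F (F i j o evaluates an (i,j)-partial ordering o):
   xo i j = o^*(i,j). *)
Fixpoint xo (F : nat -> nat -> seq T -> rat) (i : nat) : nat -> seq T :=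
  match i with
  | 0 => fun j => take j pb
  | i'.+1 => fix xoj (j : nat) : seq T :=
      match j with
      | 0 => take i'.+1 pa
      | j'.+1 =>
          let ca := rcons (xo F i' j'.+1) (nth x0 pa i') in
          let cb := rcons (xoj j') (nth x0 pb j') in
          if F i'.+1 j'.+1 cb < F i'.+1 j'.+1 ca then ca else cb
      end
  end.

Definition xOrder (F : nat -> nat -> seq T -> rat) : seq T :=
  xo F (size pa) (size pb).

Definition xAUC (o A B : seq T) : rat :=
  (\sum_(x <- A) \sum_(y <- B) ([&& Y x, ~~ Y y & precedes o x y] : nat))%N%:R
  / (count Y A * count (predC Y) B)%N%:R.

Definition DeltaxAUC (o : seq T) : rat := `| xAUC o pa pb - xAUC o pb pa |.

End XOrder.

(* Write g(i,j) for the signed gap H_ab/k_ab - H_ba/k_ba of the partial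
   ordering o^*(i,j).  Appending the next a-sample raises the gap by a "gain"
   in [0, 1/n_1^a] (its pairs with the not yet placed label-0 samples of b,
   divided by k_ab = n_1^a n_0^b); appending the next b-sample lowers it by a
   "loss" in [0, 1/n_1^b].  Since \hat G_\infty = -|gap|, xOrder always keeps
   the candidate of smaller absolute gap. *)

From mathcomp Require Import all_boot all_order all_algebra.
From mathcomp Require Import ring lra zify.
Set Implicit Arguments. Unset Strict Implicit. Unset Printing Implicit Defensive.
Import Order.TTheory GRing.Theory Num.Theory.
Local Open Scope ring_scope.

Section GreedyWalk.

(* g is a walk on the grid {0..na} x {0..nb}: moving down (i -> i+1) adds
   alpha i j >= 0, moving right (j -> j+1) subtracts beta i j >= 0, and inside
   the grid the step with the smaller resulting absolute value is taken. *)
Variables (R : realFieldType) (na nb : nat).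
Variables (g alpha beta : nat -> nat -> R) (M : R).
Hypothesis g00 : g 0 0 = 0.
Hypothesis g_col0 : forall i, (i < na)%N -> g i.+1 0 = g i 0 + alpha i 0.
Hypothesis g_row0 : forall j, (j < nb)%N -> g 0 j.+1 = g 0 j - beta 0 j.
Hypothesis g_greedy : forall i j, (i < na)%N -> (j < nb)%N ->
  g i.+1 j.+1 = if `|g i j.+1 + alpha i j.+1| < `|g i.+1 j - beta i.+1 j|
                then g i j.+1 + alpha i j.+1 else g i.+1 j - beta i.+1 j.
Hypothesis alpha_bound : forall i j, (i < na)%N -> (j <= nb)%N ->
  0 <= alpha i j <= M.
Hypothesis beta_bound : forall i j, (i <= na)%N -> (j < nb)%N ->
  0 <= beta i j <= M.
Hypothesis alpha_last : forall i, (i < na)%N -> alpha i nb = 0.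
Hypothesis beta_last : forall j, (j < nb)%N -> beta na j = 0.
Hypothesis M_ge0 : 0 <= M.

Definition up_crossing_bounded i j := (i < na)%N -> (j <= nb)%N ->
  g i j <= 0 -> 0 < g i.+1 j -> g i.+1 j <= M.
Definition down_crossing_bounded i j := (i <= na)%N -> (j < nb)%N ->
  0 <= g i j -> g i j.+1 < 0 -> - M <= g i j.+1.

Let crossings_below i j := forall i' j', (i' + j' < i + j)%N ->
  up_crossing_bounded i' j' /\ down_crossing_bounded i' j'.

(* An upward crossing at g (i+1) j is either a down step from g i j <= 0, hence
   at most a single gain, or a right step preferred to a down step of larger
   absolute value, which the crossing properties at cell (i, j-1) control. *)
Lemma up_crossing_step i j : crossings_below i j -> up_crossing_bounded i j.
Proof.
move=> IH hi hj gij_le0 g_pos.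
case: j IH hj gij_le0 g_pos => [|j] IH hj gij_le0 g_pos.
  by move: g_pos; rewrite g_col0 // => g_pos; have := alpha_bound hi hj; lra.
have /andP[a_ge0 a_leM] := alpha_bound hi hj.
have /andP[b_ge0 b_leM] := beta_bound hi hj.
move: g_pos; rewrite g_greedy //; case: ifP => [_|]; first lra.
move/negbT; rewrite -leNgt => rejected g_pos.
rewrite ger0_norm in rejected; last lra.
have [cand_ge0|cand_lt0] := lerP 0 (g i j.+1 + alpha i j.+1).
  by rewrite ger0_norm in rejected => //; lra.
rewrite ltr0_norm in rejected => //.
have [up down] := IH i j ltac:(by rewrite ltn_add2l).
have [gij'_le0|gij'_gt0] := lerP (g i j) 0.
  by have := up hi (ltnW hj) gij'_le0 ltac:(lra); lra.
by have := down (ltnW hi) hj ltac:(lra) ltac:(lra); lra.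
Qed.

Lemma down_crossing_step i j : crossings_below i j -> down_crossing_bounded i j.
Proof.
move=> IH hi hj gij_ge0 g_neg.
case: i IH hi gij_ge0 g_neg => [|i] IH hi gij_ge0 g_neg.
  by move: g_neg; rewrite g_row0 // => g_neg; have := beta_bound hi hj; lra.
have /andP[b_ge0 b_leM] := beta_bound hi hj.
have /andP[a_ge0 a_leM] := alpha_bound hi hj.
move: g_neg; rewrite g_greedy //; case: ifP => [chosen g_neg|]; last lra.
rewrite ltr0_norm in chosen; last lra.
have [cand_le0|cand_gt0] := lerP (g i.+1 j - beta i.+1 j) 0.
  by move: chosen; rewrite ler0_norm //; lra.
rewrite gtr0_norm in chosen => //.
have [up down] := IH i j ltac:(by rewrite ltn_add2r).
have [gi'j_ge0|gi'j_lt0] := lerP 0 (g i j).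
  by have := down (ltnW hi) hj gi'j_ge0 ltac:(lra); lra.
by have := up hi (ltnW hj) ltac:(lra) ltac:(lra); lra.
Qed.

Lemma crossings_bounded i j :
  up_crossing_bounded i j /\ down_crossing_bounded i j.
Proof.
suff all_below n : forall i' j', (i' + j' < n)%N ->
    up_crossing_bounded i' j' /\ down_crossing_bounded i' j'.
  exact: (all_below (i + j).+1).
elim: n => [//|n IH] i' j' hn.
have below : crossings_below i' j'.
  by move=> i'' j'' h; apply: IH; apply: leq_trans h hn.
by split; [apply: up_crossing_step | apply: down_crossing_step].
Qed.

(* The borders of the grid have a fixed sign: only right steps occur on the
   first row and only down steps on the first column. *)
Lemma first_row_nonpos j : (j <= nb)%N -> g 0 j <= 0.
Proof.
elim: j => [|j IH] hj; first by rewrite g00.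
by rewrite g_row0 //; have := IH (ltnW hj); have := beta_bound (leq0n na) hj; lra.
Qed.

Lemma first_col_nonneg i : (i <= na)%N -> 0 <= g i 0.
Proof.
elim: i => [|i IH] hi; first by rewrite g00.
by rewrite g_col0 //; have := IH (ltnW hi); have := alpha_bound hi (leq0n nb); lra.
Qed.

(* On the last column down steps are null, so a positive value there is
   either a fresh upward crossing or was already at most M. *)
Lemma last_col_bounded i : (i <= na)%N -> 0 < g i nb -> g i nb <= M.
Proof.
elim: i => [|i IH] hi g_pos; first by have := first_row_nonpos (leqnn nb); lra.
have [gi_le0|gi_pos] := lerP (g i nb) 0.
  by have [up _] := crossings_bounded i nb; apply: up.
have gi_leM := IH (ltnW hi) gi_pos.
have [nb0|nb_gt0] := posnP nb.
  by have := g_col0 hi; rewrite -nb0 alpha_last // addr0; lra.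
have nbE : nb = nb.-1.+1 by rewrite prednK.
move: g_pos; rewrite [in g i.+1 nb]nbE g_greedy ?ltn_predL // -nbE.
rewrite alpha_last // addr0; case: ifP => [_|]; first lra.
move/negbT; rewrite -leNgt (gtr0_norm gi_pos) => rejected g_pos.
by rewrite (gtr0_norm g_pos) in rejected; lra.
Qed.

(* Dually, right steps are null on the last row. *)
Lemma last_row_bounded j : (j <= nb)%N -> g na j < 0 -> - M <= g na j.
Proof.
elim: j => [|j IH] hj g_neg; first by have := first_col_nonneg (leqnn na); lra.
have [gj_ge0|gj_neg] := lerP 0 (g na j).
  by have [_ down] := crossings_bounded na j; apply: down.
have gj_geM := IH (ltnW hj) gj_neg.
have [na0|na_gt0] := posnP na.
  by have := g_row0 hj; rewrite -na0 beta_last // subr0; lra.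
have naE : na = na.-1.+1 by rewrite prednK.
move: g_neg; rewrite [in g na j.+1]naE g_greedy ?ltn_predL // -naE.
rewrite beta_last // subr0; case: ifP => [chosen g_neg|]; last lra.
by move: chosen; rewrite (ltr0_norm gj_neg) (ltr0_norm g_neg); lra.
Qed.

Theorem greedy_walk_bounded : `|g na nb| <= M.
Proof.
have [g_neg|g_pos|->] := ltrgtP (g na nb) 0; last by rewrite normr0.
- by rewrite ltr0_norm //; have := last_row_bounded (leqnn nb) g_neg; lra.
- by rewrite gtr0_norm //; exact: last_col_bounded (leqnn na) g_pos.
Qed.

End GreedyWalk.

Section Rankings.
Variables (T : eqType) (x0 : T) (Y : T -> bool).

Lemma precedes_rcons (o : seq T) x y z : x \in o -> y \in o ->
  precedes (rcons o z) x y = precedes o x y.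
Proof. by move=> hx hy; rewrite /precedes -cats1 !index_cat hx hy. Qed.

Lemma precedes_rcons_new (o : seq T) x z : x \in o -> z \notin o ->
  precedes (rcons o z) x z.
Proof.
move=> hx hz; rewrite /precedes -cats1 !index_cat hx (negbTE hz) /= eqxx addn0.
by rewrite index_mem.
Qed.

Lemma precedes_new_rcons (o : seq T) x z : x \in o -> z \notin o ->
  precedes (rcons o z) z x = false.
Proof.
move=> hx hz; rewrite /precedes -cats1 !index_cat hx (negbTE hz) /= eqxx addn0.
by apply/negbTE; rewrite -leqNgt ltnW // index_mem.
Qed.

Lemma H_ba_swap (p q o : seq T) i j :
  H_ba x0 Y p q i j o = H_ab x0 Y q p j i o.
Proof. by []. Qed.

(* The pairs (label-1 sample p_i, label-0 sample of q) whose q-member is not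
   yet placed in a (i+1, j)-partial ordering: the contribution of p_i to H_ab
   that does not depend on the ordering. *)
Definition pending_pairs (p q : seq T) i j : nat :=
  (\sum_(h < size q) ([&& Y (nth x0 p i), ~~ Y (nth x0 q h) & (j <= h)%N] : nat))%N.

Section Append.
Variables (p q o : seq T) (i j : nat).
Hypothesis p_placed : forall k, (k < i)%N -> nth x0 p k \in o.
Hypothesis q_placed : forall h, (h < j)%N -> nth x0 q h \in o.

(* Appending the next p-sample adds exactly its pending pairs to H_ab: it is
   ranked below every placed q-sample. *)
Lemma H_ab_rcons_p : nth x0 p i \notin o ->
  H_ab x0 Y p q i.+1 j (rcons o (nth x0 p i)) =
  (H_ab x0 Y p q i j o + pending_pairs p q i j)%N.
Proof.
move=> p_new; rewrite /H_ab big_ord_recr /=; congr (_ + _)%N.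
  apply: eq_bigr => k _; apply: eq_bigr => h _.
  have [//|jh] := leqP j h.
  by rewrite /= precedes_rcons //; [apply: p_placed | apply: q_placed].
apply: eq_bigr => h _; have [//|jh] := leqP j h.
by rewrite /= precedes_new_rcons //; apply: q_placed.
Qed.

(* Appending the next q-sample does not change H_ab: that sample was counted
   as "below" every placed p-sample already. *)
Lemma H_ab_rcons_q : nth x0 q j \notin o ->
  H_ab x0 Y p q i j.+1 (rcons o (nth x0 q j)) = H_ab x0 Y p q i j o.
Proof.
move=> q_new; rewrite /H_ab; apply: eq_bigr => k _; apply: eq_bigr => h _.
have [hj|hj|->] := ltngtP h j.
- by rewrite /= precedes_rcons //; [apply: p_placed | apply: q_placed].
- by [].
- by rewrite /= precedes_rcons_new //; apply: p_placed.
Qed.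

End Append.

Lemma sum_nth_count (s : seq T) (P : pred T) :
  (\sum_(h < size s) (P (nth x0 s h) : nat))%N = count P s.
Proof.
rewrite -sum1_count (big_nth x0) big_mkord [RHS]big_mkcond.
by apply: eq_bigr => h _; case: (P _).
Qed.

Lemma pending_pairs_le (p q : seq T) i j :
  (pending_pairs p q i j <= count (predC Y) q)%N.
Proof.
rewrite -sum_nth_count; apply: leq_sum => h _ /=.
by case: (Y (nth x0 p i)); case: (Y (nth x0 q h)); case: (j <= h)%N.
Qed.

Lemma pending_pairs_last (p q : seq T) i : pending_pairs p q i (size q) = 0%N.
Proof. by apply: big1 => h _; rewrite leqNgt ltn_ord !andbF. Qed.

Lemma xAUC_H_ab (o p q : seq T) : xAUC Y o p q =
  (H_ab x0 Y p q (size p) (size q) o)%:R / (count Y p * count (predC Y) q)%N%:R.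
Proof.
rewrite /xAUC /H_ab; congr (_%:R / _); rewrite (big_nth x0) big_mkord.
apply: eq_bigr => k _; rewrite (big_nth x0) big_mkord.
by apply: eq_bigr => h _; rewrite leqNgt ltn_ord.
Qed.

End Rankings.

Section XOrderGap.
Variables (T : eqType) (x0 : T) (Y : T -> bool) (pa pb : seq T).
Hypothesis pa_uniq : uniq pa.
Hypothesis pb_uniq : uniq pb.
Hypothesis disjoint_groups : forall x, x \in pa -> x \notin pb.

Local Notation F := (Ghat_inf x0 Y pa pb).
Local Notation ostar := (xo x0 pa pb F).

Lemma ostar_i0 i : ostar i 0 = take i pa.
Proof. by case: i => [|i] //=; rewrite !take0. Qed.

Lemma ostar_0j j : ostar 0 j = take j pb.
Proof. by []. Qed.

Lemma mem_ostar i j x : (i <= size pa)%N -> (j <= size pb)%N ->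
  (x \in ostar i j) = (x \in take i pa) || (x \in take j pb).
Proof.
elim: i j => [|i IHi] j hi hj; first by rewrite ostar_0j take0.
elim: j hj => [|j IHj] hj; first by rewrite ostar_i0 take0 orbF.
rewrite /=; case: ifP => _; rewrite mem_rcons in_cons.
  by rewrite IHi ?(ltnW hi) // (take_nth x0 hi) mem_rcons in_cons orbA.
by rewrite IHj ?(ltnW hj) // (take_nth x0 hj) mem_rcons in_cons orbCA.
Qed.

Lemma mem_take_nth (s : seq T) k i : (k < i)%N -> (i <= size s)%N ->
  nth x0 s k \in take i s.
Proof. by move=> hk hi; rewrite -(nth_take x0 hk) mem_nth // size_takel. Qed.

Lemma nth_notin_take (s : seq T) i : uniq s -> (i < size s)%N ->
  nth x0 s i \notin take i s.
Proof.
move=> us hi; have := take_uniq i.+1 us.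
by rewrite (take_nth x0 hi) rcons_uniq => /andP[].
Qed.

Section Cell.
Variables (i j : nat).
Hypotheses (hi : (i <= size pa)%N) (hj : (j <= size pb)%N).

Lemma ostar_placed_a k : (k < i)%N -> nth x0 pa k \in ostar i j.
Proof. by move=> hk; rewrite mem_ostar // mem_take_nth. Qed.

Lemma ostar_placed_b h : (h < j)%N -> nth x0 pb h \in ostar i j.
Proof. by move=> hh; rewrite mem_ostar // mem_take_nth ?orbT. Qed.

Lemma ostar_next_a : (i < size pa)%N -> nth x0 pa i \notin ostar i j.
Proof.
move=> hi'; rewrite mem_ostar // negb_or nth_notin_take //=.
by apply/negP => /mem_take; apply/negP/disjoint_groups/mem_nth.
Qed.

Lemma ostar_next_b : (j < size pb)%N -> nth x0 pb j \notin ostar i j.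
Proof.
move=> hj'; rewrite mem_ostar // negb_or nth_notin_take // andbT.
by apply/negP => /mem_take /disjoint_groups; rewrite mem_nth.
Qed.

End Cell.

Definition gap i j (o : seq T) : rat :=
  (H_ab x0 Y pa pb i j o)%:R / (k_ab Y pa pb)%:R -
  (H_ba x0 Y pa pb i j o)%:R / (k_ba Y pa pb)%:R.

Lemma Ghat_inf_gap i j o : F i j o = - `|gap i j o|.
Proof. by []. Qed.

Definition gain i j : rat := (pending_pairs x0 Y pa pb i j)%:R / (k_ab Y pa pb)%:R.
Definition loss i j : rat := (pending_pairs x0 Y pb pa j i)%:R / (k_ba Y pa pb)%:R.

Definition gap_ostar i j := gap i j (ostar i j).

Lemma gap_append_a i j : (i < size pa)%N -> (j <= size pb)%N ->
  gap i.+1 j (rcons (ostar i j) (nth x0 pa i)) = gap_ostar i j + gain i j.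
Proof.
move=> hi hj; have hi' := ltnW hi.
have pa_in := ostar_placed_a hi' hj; have pb_in := ostar_placed_b hi' hj.
rewrite /gap /gap_ostar /gain !H_ba_swap H_ab_rcons_p ?ostar_next_a //.
by rewrite H_ab_rcons_q ?ostar_next_a // natrD mulrDl addrAC.
Qed.

Lemma gap_append_b i j : (i <= size pa)%N -> (j < size pb)%N ->
  gap i j.+1 (rcons (ostar i j) (nth x0 pb j)) = gap_ostar i j - loss i j.
Proof.
move=> hi hj; have hj' := ltnW hj.
have pa_in := ostar_placed_a hi hj'; have pb_in := ostar_placed_b hi hj'.
rewrite /gap /gap_ostar /loss !H_ba_swap H_ab_rcons_q ?ostar_next_b //.
by rewrite H_ab_rcons_p ?ostar_next_b // natrD mulrDl opprD addrA.
Qed.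

(* The gaps along xOrder form a greedy walk with steps gain and loss. *)
Lemma gap_ostar00 : gap_ostar 0 0 = 0.
Proof. by rewrite /gap_ostar /gap /H_ab /H_ba !big_ord0 !mul0r subr0. Qed.

Lemma gap_ostar_col0 i : (i < size pa)%N ->
  gap_ostar i.+1 0 = gap_ostar i 0 + gain i 0.
Proof.
move=> hi; rewrite -gap_append_a // {1}/gap_ostar.
by rewrite !ostar_i0 (take_nth x0 hi).
Qed.

Lemma gap_ostar_row0 j : (j < size pb)%N ->
  gap_ostar 0 j.+1 = gap_ostar 0 j - loss 0 j.
Proof.
move=> hj; rewrite -gap_append_b // {1}/gap_ostar.
by rewrite !ostar_0j (take_nth x0 hj).
Qed.

Lemma gap_ostar_greedy i j : (i < size pa)%N -> (j < size pb)%N ->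
  gap_ostar i.+1 j.+1 =
    if `|gap_ostar i j.+1 + gain i j.+1| < `|gap_ostar i.+1 j - loss i.+1 j|
    then gap_ostar i j.+1 + gain i j.+1 else gap_ostar i.+1 j - loss i.+1 j.
Proof.
move=> hi hj; rewrite {1}/gap_ostar /= !Ghat_inf_gap ltrN2.
rewrite gap_append_a // gap_append_b //.
by case: ifP => _; rewrite ?gap_append_a ?gap_append_b.
Qed.

Lemma DeltaxAUC_gap :
  DeltaxAUC Y pa pb (xOrder x0 pa pb F) = `|gap_ostar (size pa) (size pb)|.
Proof.
rewrite /DeltaxAUC /xOrder /gap_ostar /gap /k_ab /k_ba !(xAUC_H_ab x0).
by rewrite (mulnC (count Y pb)).
Qed.

End XOrderGap.

Lemma pending_share_le {R : realFieldType} (n1 n0 s : nat) :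
  (0 < n1)%N -> (0 < n0)%N -> (s <= n0)%N ->
  0 <= (s%:R / (n1 * n0)%N%:R : R) <= 1 / n1%:R.
Proof.
move=> n1_gt0 n0_gt0 s_le; rewrite divr_ge0 ?ler0n //=.
rewrite ler_pdivrMr ?ltr0n ?muln_gt0 ?n1_gt0 // natrM.
have -> : 1 / n1%:R * (n1%:R * n0%:R) = n0%:R :> R.
  by field; rewrite pnatr_eq0; lia.
by rewrite ler_nat.
Qed.

Theorem theorem1 (T : eqType) (x0 : T) (Y : T -> bool) (pa pb : seq T) :
  uniq pa -> uniq pb -> (forall x, x \in pa -> x \notin pb) ->
  (1 <= count Y pa)%N -> (1 <= count (predC Y) pa)%N ->
  (1 <= count Y pb)%N -> (1 <= count (predC Y) pb)%N ->
  DeltaxAUC Y pa pb (xOrder x0 pa pb (Ghat_inf x0 Y pa pb))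
    <= Num.max (1 / (count Y pa)%:R) (1 / (count Y pb)%:R).
Proof.
move=> pa_uniq pb_uniq disj n1a n0a n1b n0b.
set M := Num.max _ _.
rewrite DeltaxAUC_gap.
apply: (greedy_walk_bounded (alpha := gain x0 Y pa pb) (beta := loss x0 Y pa pb)).
- exact: gap_ostar00.
- by move=> *; apply: gap_ostar_col0.
- by move=> *; apply: gap_ostar_row0.
- by move=> *; apply: gap_ostar_greedy.
- move=> i j _ _; have pending := pending_pairs_le x0 Y pa pb i j.
  have /andP[-> le] := pending_share_le (R := rat) n1a n0b pending.
  by rewrite le_max le.
- move=> i j _ _; have pending := pending_pairs_le x0 Y pb pa j i.
  rewrite /loss /k_ba mulnC.
  have /andP[-> le] := pending_share_le (R := rat) n1b n0a pending.
  by rewrite le_max le orbT.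
- by move=> i _; rewrite /gain pending_pairs_last mul0r.
- by move=> j _; rewrite /loss pending_pairs_last mul0r.
- by rewrite le_max divr_ge0 ?ler0n.
Qed.
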